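(* Let $X$ be a metric space with an accumulation point. Then: (i) there is a sequence $x\in X^{[\omega]^2}$ with $\Lambda_x(\mathsf{r})\neq\Gamma_x(\mathsf{r})$; (ii) there is a sequence $x\in X^{[\omega]^2}$ such that $\Lambda_x(\mathsf{r})$ is not closed; (iii) if $X$ is locally compact, then for every $x\in X^{[\omega]^2}$ each isolated point of $\Gamma_x(\mathsf{r})$ belongs to $\Lambda_x(\mathsf{r})$. Similarly: (i$'$) there is a sequence $x\in X^{\omega}$ with $\Lambda_x(\mathrm{FS})\neq\Gamma_x(\mathrm{FS})$; (ii$'$) there is a sequence $x\in X^{\omega}$ such that $\Lambda_x(\mathrm{FS})$ is not closed; (iii$'$) if $X$ is locally compact, then for every $x\in X^{\omega}$ each isolated point of $\Gamma_x(\mathrm{FS})$ belongs to $\Lambda_x(\mathrm{FS})$.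
   Context: $\omega$ is the set of nonnegative integers, $[D]^2$ the 2-element subsets of $D$, $[D]^\omega$ the infinite subsets. Let $\mathsf{r}:[\omega]^\omega\to[[\omega]^2]^\omega$, $\mathsf{r}(D)=[D]^2$, and $\mathrm{FS}:[\omega]^\omega\to[\omega]^\omega$, $\mathrm{FS}(D)=\{\sum_{n\in\alpha}n:\alpha\subseteq D\text{ finite nonempty}\}$. For $\rho\in\{\mathsf{r},\mathrm{FS}\}$ with domain $[\omega]^\omega$ and codomain consisting of infinite subsets of $\Psi$ (where $\Psi=[\omega]^2$ for $\mathsf{r}$, $\Psi=\omega$ for $\mathrm{FS}$), and a sequence $x:\Psi\to X$: $\Gamma_x(\rho)$ is the set of $\eta\in X$ such that for every neighborhood $U$ of $\eta$ there is an infinite $F\subseteq\omega$ with $\rho(F)\subseteq\{s\in\Psi:x_s\in U\}$; $\Lambda_x(\rho)$ is the set of $\eta\in X$ for which there is an infinite $F\subseteq\omega$ such that for every neighborhood $U$ of $\eta$ there is a finite $K\subseteq\omega$ with $x_s\in U$ for all $s\in\rho(F\setminus K)$. *)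

From HB Require Import structures.
From mathcomp Require Import all_boot all_order all_algebra.
From mathcomp Require Import all_classical all_reals all_analysis.
Set Implicit Arguments. Unset Strict Implicit. Unset Printing Implicit Defensive.
Import Order.TTheory GRing.Theory Num.Theory.
Local Open Scope classical_set_scope.

(* [omega]^2 : 2-element subsets {m, n} of nat, represented as ordered pairs
   (m, n) with m < n (a bijective encoding). *)
Definition pair2 := {p : nat * nat | (p.1 < p.2)%N}.

Definition rr (D : set nat) : set pair2 :=
  [set s | D (val s).1 /\ D (val s).2].

Definition FS (D : set nat) : set nat :=
  [set m | exists s : seq nat,
      [/\ uniq s, s != [::], (forall i, i \in s -> D i) & m = (\sum_(i <- s) i)%N]].

Definition Gamma_set {Psi : Type} {X : topologicalType}
    (rho : set nat -> set Psi) (x : Psi -> X) : set X :=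
  [set eta | forall U, nbhs eta U ->
     exists F : set nat, infinite_set F /\ rho F `<=` x @^-1` U].

Definition Lambda_set {Psi : Type} {X : topologicalType}
    (rho : set nat -> set Psi) (x : Psi -> X) : set X :=
  [set eta | exists F : set nat, infinite_set F /\
     forall U, nbhs eta U ->
       exists K : set nat, finite_set K /\ rho (F `\` K) `<=` x @^-1` U].

Definition isolated_point {X : topologicalType} (A : set X) (eta : X) : Prop :=
  A eta /\ exists U, nbhs eta U /\ U `&` A = [set eta].

From Stdlib Require Import PeanoNat.
From HB Require Import structures.
From mathcomp Require Import all_boot all_order all_algebra.
From mathcomp Require Import all_classical all_reals all_analysis.
From mathcomp Require Import finmap lra.
Set Implicit Arguments. Unset Strict Implicit. Unset Printing Implicit Defensive.
Import Order.TTheory GRing.Theory Num.Theory.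
Local Open Scope classical_set_scope.

(* The proof rests on a Ramsey-type property of r and FS ([diagonal_ultrafilters]):
   for every infinite F0 there is an ultrafilter Q containing rho(F0) such that every
   decreasing sequence B_k of members of Q is diagonalised by one infinite F, in the
   sense that rho(F minus a finite set K_k) is contained in B_k.  For r, Q is the
   Fubini square of a nonprincipal ultrafilter containing F0.  For FS, Q is an
   idempotent of (beta N, +) containing every tail FS(F0 /\ [m, oo)), obtained by
   Ellis' argument (Zorn's lemma on closed subsemigroups), and F is built as in the
   Galvin-Glazer proof of Hindman's theorem.

   (iii) If eta is isolated in Gamma, with witness F0, the image of Q under x lives in
   a compact neighbourhood of eta, hence converges to some y.  Diagonalising the balls
   around y puts y in Lambda, which is contained in Gamma, and y is close to eta, so
   y = eta.

   (i), (ii) Take y_k -> eta with y_k <> eta, and split N into infinitely many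
   infinite blocks.  Give a pair, resp. a number, the value y_(b+1) when both
   coordinates, resp. all binary digits, lie in block b, and y_0 otherwise.  Every
   y_(b+1) is in Lambda, so eta is in Gamma and in the closure of Lambda.  But eta is
   not in Lambda: along a witness F the value is eventually a single y_(c+1), which
   some neighbourhood of eta avoids. *)

Lemma infinite_natP (F : set nat) :
  infinite_set F <-> forall N, exists2 m, N <= m & F m.
Proof.
split=> [Finf N|Fub /finite_fsetP [S defF]].
  apply: contrapT => noF; apply: Finf; apply: sub_finite_set (finite_II N) => m Fm /=.
  by rewrite ltnNge; apply/negP => Nm; apply: noF; exists m.
have [m + Fm] := Fub (\max_(i <- S) i).+1; rewrite defF in Fm.
by rewrite ltnNge (@leq_bigmax_seq _ _ xpredT id).
Qed.

Lemma nonincreasing_setP T (B : nat -> set T) :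
  (forall n, B n.+1 `<=` B n) -> forall m n, m <= n -> B n `<=` B m.
Proof.
move=> Bdecr m n /subnK <-; elim: (n - m) => [|d IH] //= t.
by rewrite addSn => /Bdecr /IH.
Qed.

Lemma ultra_setVsetC T (F : set_system T) :
  ProperFilter F -> (forall A, F A \/ F (~` A)) -> UltraFilter F.
Proof.
move=> FF FVC; split=> // G GF FG; apply/seteqP; split=> [A GA|]; last exact: FG.
have [//|/FG GCA] := FVC A.
by exfalso; apply: (filter_not_empty G); rewrite -(setICr A); apply: filterI.
Qed.

Lemma ultra_extend_from I T (D : set I) (B : I -> set T) :
  (exists i, D i) -> (forall i j, D i -> D j -> exists2 k, D k & B k `<=` B i `&` B j) ->
  (forall i, D i -> B i !=set0) -> exists p, UltraFilter p /\ forall i, D i -> p (B i).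
Proof.
move=> D0 Ddir B0; have BF := filter_from_proper (filter_from_filter D0 Ddir) B0.
have [p [pU Bp]] := ultraFilterLemma BF.
by exists p; split=> // i Di; apply: Bp; exists i.
Qed.

Lemma ultra_extend_decr T (B : nat -> set T) :
  (forall n, B n.+1 `<=` B n) -> (forall n, B n !=set0) ->
  exists p, UltraFilter p /\ forall n, p (B n).
Proof.
move=> Bdecr B0; have Bdir m n : exists2 k, setT k & B k `<=` B m `&` B n.
  exists (maxn m n) => // t Bt.
  by split; apply: nonincreasing_setP Bt; rewrite ?leq_maxl ?leq_maxr.
have [p [pU Bp]] := ultra_extend_from (ex_intro _ 0 I) (fun m n _ _ => Bdir m n)
  (fun n _ => B0 n).
by exists p; split=> // n; apply: Bp.
Qed.

Definition shift_set (A : set nat) n : set nat := [set m | A (n + m)].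

Definition star (p : set_system nat) (A : set nat) : set nat := [set n | p (shift_set A n)].

Definition ultra_add (p q : set_system nat) : set_system nat := [set A | p (star q A)].

Lemma shift_setD A m n : shift_set (shift_set A m) n = shift_set A (m + n).
Proof. by apply/funext => k; rewrite /shift_set /= addnA. Qed.

Lemma ultra_addA : associative ultra_add.
Proof.
move=> p q r; apply/funext => A; rewrite /ultra_add /star /=.
by congr (p _); apply/funext => m /=; congr (q _); apply/funext => n /=; rewrite shift_setD.
Qed.

Lemma ultra_add_ultra p q : UltraFilter p -> UltraFilter q -> UltraFilter (ultra_add p q).
Proof.
move=> pU qU; have addF : Filter (ultra_add p q).
  split; rewrite /ultra_add /star /=.
  - by apply: filterS filterT => n _; apply: filterT.
  - move=> A B /= pA pB; apply: filterS (filterI pA pB) => n [qA qB].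
    by apply: filterS (filterI qA qB) => m [].
  - by move=> A B AB /=; apply: filterS => n; apply: filterS => m; apply: AB.
apply: ultra_setVsetC => [|A].
  split=> // p0; apply: (filter_not_empty p).
  by apply: filterS (p0 : p (star q set0)) => n; apply: filter_not_empty.
have [pA|pCA] := in_ultra_setVsetC (star q A) pU; [by left|right].
apply: filterS pCA => n /= nqA.
by have [/nqA|] := in_ultra_setVsetC (shift_set A n) qU.
Qed.

(* A family G of subsets of N stands for the closed set [ultra_set G] of beta N. *)
Definition ultra_set (G : set_system nat) := [set p | UltraFilter p /\ G `<=` p].

Definition ultra_meet (G : set_system nat) := [set A | forall p, ultra_set G p -> p A].

Definition subsemigroup_family (G : set_system nat) :=
  ultra_set G !=set0 /\
  forall p q, ultra_set G p -> ultra_set G q -> ultra_set G (ultra_add p q).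

#[global] Instance ultra_meet_filter G : Filter (ultra_meet G).
Proof.
split=> [p [pU _]|A B GA GB p Gp|A B AB GA p Gp]; first exact: filterT.
- by have [pU _] := Gp; apply: filterI; [apply: GA|apply: GB].
- by have [pU _] := Gp; apply: filterS AB (GA p Gp).
Qed.

Lemma sub_ultra_meet G : G `<=` ultra_meet G.
Proof. by move=> A GA p [_]; apply. Qed.

Lemma ultra_meetS G G' : G `<=` G' -> ultra_meet G `<=` ultra_meet G'.
Proof. by move=> GG' A GA p [pU G'p]; apply: GA; split=> // B /GG' /G'p. Qed.

(* Right translation by p is continuous on beta N, so the image of the compact set
   [ultra_set G] is closed. *)
Lemma ultra_set_add_image G p : ultra_set G p ->
  forall r, ultra_set [set A | forall q, ultra_set G q -> ultra_add q p A] r ->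
  exists2 q, ultra_set G q & ultra_add q p = r.
Proof.
move=> [pU Gp] r [rU G'r].
pose D := [set BA : set nat * set nat | ultra_meet G BA.1 /\ r BA.2].
pose B (BA : set nat * set nat) := BA.1 `&` star p BA.2.
have D0 : exists BA, D BA by exists (setT, setT); split; apply: filterT.
have Ddir BA BA' : D BA -> D BA' -> exists2 BA'', D BA'' & B BA'' `<=` B BA `&` B BA'.
  move=> [GB rA] [GB' rA']; exists (BA.1 `&` BA'.1, BA.2 `&` BA'.2).
    by split; [exact: filterI GB GB'|exact: filterI rA rA'].
  by move=> n [[Bn B'n] pAA']; split; split=> //; apply: filterS pAA' => m [].
have B0 BA : D BA -> B BA !=set0.
  move=> [GB rA]; apply/set0P/eqP => B0.
  have rCA : r (~` BA.2); last first.
    by apply: (filter_not_empty r); rewrite -(setICr BA.2); exact: filterI rA rCA.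
  apply: G'r => q Gq; have [qU _] := Gq; apply: filterS (GB q Gq) => n Bn.
  have [pA|//] := in_ultra_setVsetC (shift_set BA.2 n) pU.
  by have : B BA n by []; rewrite B0.
have [q [qU Bq]] := ultra_extend_from D0 Ddir B0.
have Gq : ultra_set G q.
  split=> // A /sub_ultra_meet GA; apply: filterS (Bq (A, setT) _) => [n []//|].
  by split=> //; apply: filterT.
have qpU := ultra_add_ultra qU pU; exists q => //; apply: max_filter => A rA.
by apply: filterS (Bq (setT, A) _) => [n []//|]; split=> //; apply: filterT.
Qed.

Lemma subsemigroup_family_maximal G0 : subsemigroup_family G0 ->
  exists G, [/\ G0 `<=` G, subsemigroup_family G &
    forall G', G `<=` G' -> subsemigroup_family G' -> G' `<=` G].
Proof.
move=> G0semi; pose P H := subsemigroup_family (G0 `|` H).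
have [|H [PH Hmax]] := @Zorn_bigcup _ P; last first.
  exists (G0 `|` H); split=> [A G0A|//|G' GG' G'semi A G'A]; first by left.
  apply: contrapT => GA; apply: (Hmax (H `|` G')).
    by split=> [B HB|HG']; [left|apply: GA; right; apply: HG'; right].
  by rewrite /P setUA (setUidr GG').
move=> F FP Fchain; pose U := \bigcup_(H in F) H.
pose F0 := [set H | H = set0 \/ F H].
have F0P H : F0 H -> P H by case=> [->|/FP//]; rewrite /P setU0.
have F0U H : F0 H -> G0 `|` H `<=` G0 `|` U.
  by case=> [->|FH] A [G0A|HA]; [left|case: HA|left|right; exists H].
have UF0 A : (G0 `|` U) A -> exists2 H, F0 H & (G0 `|` H) A.
  by case=> [G0A|[H FH HA]]; [exists set0; [left|left]|exists H; [right|right]].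
have F0chain H H' : F0 H -> F0 H' -> H `<=` H' \/ H' `<=` H.
  by case=> [->|FH] [->|FH']; [left|left|right|exact: Fchain].
split.
  pose D := [set A | exists2 H, F0 H & ultra_meet (G0 `|` H) A].
  have D0 : exists A, D A by exists setT, set0; [left|apply: filterT].
  have Ddir A B : D A -> D B -> exists2 C, D C & id C `<=` id A `&` id B.
    move=> [H FH HA] [H' FH' H'B]; exists (A `&` B) => //.
    have [HH'|H'H] := F0chain H H' FH FH'.
      by exists H' => //; apply: filterI H'B; apply: ultra_meetS HA; apply: setUS.
    by exists H => //; apply: filterI HA _; apply: ultra_meetS H'B; apply: setUS.
  have DN0 A : D A -> id A !=set0.
    move=> [H /F0P [[p Hp] _] HA]; have [pU _] := Hp.
    exact: filter_ex (HA p Hp).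
  have [p [pU Dp]] := ultra_extend_from D0 Ddir DN0.
  exists p; split=> // A /UF0 [H FH HA]; apply: (Dp A); exists H => //.
  exact: sub_ultra_meet.
move=> p q [pU Up] [qU Uq]; split; first exact: ultra_add_ultra.
move=> A /UF0 [H FH HA]; have [_ Hsemi] := F0P H FH.
have [_] := Hsemi p q (conj pU (subset_trans (F0U H FH) Up))
  (conj qU (subset_trans (F0U H FH) Uq)).
exact.
Qed.

(* Ellis' lemma: a maximal family is a minimal closed subsemigroup, and every point
   of it is idempotent. *)
Section MaximalSubsemigroupFamily.
Variable G : set_system nat.
Hypothesis Gsemi : subsemigroup_family G.
Hypothesis Gmax : forall G', G `<=` G' -> subsemigroup_family G' -> G' `<=` G.
Variable p : set_system nat.
Hypothesis Gp : ultra_set G p.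

Lemma maximal_left_unit : exists2 q, ultra_set G q & ultra_add q p = p.
Proof.
have [pU Gsubp] := Gp; have [_ Gadd] := Gsemi.
pose G' := [set A | forall q, ultra_set G q -> ultra_add q p A].
have GG' : G `<=` G' by move=> A GA q Gq; have [_] := Gadd q p Gq Gp; apply.
have G'semi : subsemigroup_family G'.
  split; first by exists (ultra_add p p); split=> [|A]; [exact: ultra_add_ultra|apply].
  move=> r1 r2 G'r1 G'r2.
  have [q1 Gq1 <-] := ultra_set_add_image Gp G'r1.
  have [q2 Gq2 <-] := ultra_set_add_image Gp G'r2.
  have [[q1U _] [q2U _]] := (Gq1, Gq2).
  split; first by apply: ultra_add_ultra; apply: ultra_add_ultra.
  by move=> A G'A; rewrite ultra_addA; apply: G'A; exact: Gadd (Gadd _ _ Gq1 Gp) Gq2.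
apply: (ultra_set_add_image Gp); split=> //.
exact: subset_trans (Gmax GG' G'semi) Gsubp.
Qed.

Lemma maximal_idempotent : ultra_add p p = p.
Proof.
have [pU Gsubp] := Gp; have [_ Gadd] := Gsemi.
have [q0 Gq0 q0p] := maximal_left_unit.
pose Gp' := G `|` [set star p A | A in p].
have Gp'P q : ultra_set Gp' q -> ultra_set G q /\ ultra_add q p = p.
  move=> [qU Gp'q]; split; first by split=> // A GA; apply: Gp'q; left.
  have qpU := ultra_add_ultra qU pU.
  by apply: max_filter => A pA; apply: Gp'q; right; exists A.
have Gp'semi : subsemigroup_family Gp'.
  split.
    exists q0; have [q0U _] := Gq0.
    split=> // _ [/(proj2 Gq0)//|[B pB <-]].
    by change (ultra_add q0 p B); rewrite q0p.
  move=> q1 q2 /(Gp'P) [Gq1 q1p] /(Gp'P) [Gq2 q2p]; have [q12U Gq12] := Gadd _ _ Gq1 Gq2.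
  split=> // _ [/Gq12//|[B pB <-]].
  by change (ultra_add (ultra_add q1 q2) p B); rewrite -ultra_addA q2p q1p.
have Gp'G := Gmax (@subsetUl _ G _) Gp'semi.
have [pU' Gp'p] : ultra_set Gp' p.
  by split=> // A [/Gsubp//|GpA]; apply: Gsubp; apply: Gp'G; right.
have ppU := ultra_add_ultra pU pU.
by apply: max_filter => A pA; apply: Gp'p; right; exists A.
Qed.

End MaximalSubsemigroupFamily.

Lemma ultra_idempotent G0 : subsemigroup_family G0 ->
  exists p, ultra_set G0 p /\ ultra_add p p = p.
Proof.
move=> /subsemigroup_family_maximal [G [G0G Gsemi Gmax]].
have [[p Gp] _] := Gsemi; exists p; split; last exact: (maximal_idempotent Gsemi Gmax Gp).
by have [pU Gsubp] := Gp; split=> // A /G0G /Gsubp.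
Qed.

Definition diagonalizes {Psi : Type} (rho : set nat -> set Psi) (Q : set_system Psi) :=
  forall B : nat -> set Psi, (forall k, Q (B k)) -> (forall k, B k.+1 `<=` B k) ->
  exists2 F, infinite_set F &
    forall k, exists K, finite_set K /\ rho (F `\` K) `<=` B k.

Definition diagonal_ultrafilters {Psi : Type} (rho : set nat -> set Psi) :=
  forall F0, infinite_set F0 ->
  exists Q, [/\ UltraFilter Q, Q (rho F0) & diagonalizes rho Q].

Lemma increasing_range_infinite (a : nat -> nat) :
  (forall j, a j < a j.+1) -> infinite_set (range a).
Proof.
move=> aincr; apply/infinite_natP => N; exists (a N); last by exists N.
by elim: N => // N IH; apply: leq_ltn_trans IH (aincr N).
Qed.

Lemma range_setD_image (a : nat -> nat) k :
  range a `\` [set a i | i in `I_k] `<=` [set a i | i in [set i | k <= i]].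
Proof.
move=> _ [[i _ <-] notK]; exists i => //; rewrite /= leqNgt; apply/negP => ik.
by apply: notK; exists i.
Qed.

Lemma ultra_recursion (p : set_system nat) (good : nat -> set nat -> Prop)
    (next : nat -> set nat -> nat -> set nat) (C0 : set nat) :
  UltraFilter p -> (forall N, p [set n | N <= n]) ->
  (forall j C, good j C -> p C) -> good 0 C0 ->
  (forall j C a, good j C -> C a -> good j.+1 (next j C a)) ->
  exists C a, [/\ forall j, C j.+1 = next j (C j) (a j), forall j, good j (C j),
    forall j, C j (a j) & forall j, a j < a j.+1].
Proof.
move=> pU tails goodp good0 goodS.
have pick (jCN : nat * set nat * nat) : exists a, good jCN.1.1 jCN.1.2 -> jCN.1.2 a /\ jCN.2 <= a.
  have [goodC|] := pselect (good jCN.1.1 jCN.1.2); last by exists 0.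
  have [a [Ca Na]] := filter_ex (filterI (goodp _ _ goodC) (tails jCN.2)).
  by exists a.
have [f fP] := choice pick.
pose fix state j : set nat * nat := if j is j'.+1 then
    let C := next j' (state j').1 (state j').2 in (C, f (j, C, (state j').2.+1))
  else (C0, f (0, C0, 0)).
have stateP j : good j (state j).1 /\ (state j).1 (state j).2.
  elim: j => [|j [goodj Cj]]; first by split=> //; have [] := fP (0, C0, 0).
  have goodj' := goodS _ _ _ goodj Cj.
  by split=> //; have [] := fP (j.+1, next j (state j).1 (state j).2, (state j).2.+1) goodj'.
exists (fun j => (state j).1), (fun j => (state j).2); split=> // [j|j|j].
- exact: (stateP j).1.
- exact: (stateP j).2.
- by have [] := fP (j.+1, (state j.+1).1, (state j).2.+1) (stateP j.+1).1.
Qed.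

Lemma FS_mono A B : A `<=` B -> FS A `<=` FS B.
Proof. by move=> AB n [s [us s0 sA ->]]; exists s; split=> // i /sA /AB. Qed.

Lemma sub_FS A : A `<=` FS A.
Proof.
move=> e Ae; exists [:: e]; split=> //; last by rewrite big_seq1.
by move=> i; rewrite inE => /eqP ->.
Qed.

Lemma leq_sum_mem (s : seq nat) e : e \in s -> e <= \sum_(i <- s) i.
Proof. by move=> es; rewrite (big_rem e es) /= leq_addr. Qed.

Lemma FS_chain_sub (a : nat -> nat) (E : nat -> set nat) :
  (forall j, a j < a j.+1) -> (forall j, E j (a j)) ->
  (forall j, E j.+1 `<=` E j `&` shift_set (E j) (a j)) ->
  forall k, FS [set a i | i in [set i | k <= i]] `<=` E k.
Proof.
move=> aincr Ea Echain.
have Edecr j : E j.+1 `<=` E j by move=> n /Echain [].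
have window n : forall k s, uniq s -> s != [::] ->
    (forall e, e \in s -> exists2 i, k <= i < k + n & e = a i) -> E k (\sum_(e <- s) e).
  elim: n => [|n IH] k s us s0 sa.
    case: s s0 us sa => // e s _ _ /(_ e (mem_head _ _)) [i /andP [ki]].
    by rewrite addn0 => /(leq_ltn_trans ki); rewrite ltnn.
  have sa' e : e \in s -> e != a k -> exists2 i, k.+1 <= i < k.+1 + n & e = a i.
    move=> /sa [i /andP [ki ikn] ->] aik; exists i => //.
    by rewrite addSnnS ikn andbT ltn_neqAle ki andbT; apply: contra_neq aik => ->.
  have [aks|aks] := boolP (a k \in s); last first.
    apply: (Edecr k); apply: IH => // e es; apply: sa' => //.
    by apply: contraNneq aks => <-.
  rewrite (big_rem _ aks) /=; have [->|r0] := eqVneq (rem (a k) s) [::].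
    by rewrite big_nil addn0.
  suff /Echain [] : E k.+1 (\sum_(e <- rem (a k) s) e) by [].
  apply: IH r0 _ => [|e]; first exact: rem_uniq.
  by rewrite (mem_rem_uniq _ us) => /andP [eak es]; apply: sa'.
have a_ge i : i <= a i by elim: i => // i IH; apply: leq_ltn_trans IH (aincr i).
move=> k _ [s [us s0 sa ->]]; apply: (window (\sum_(e <- s) e).+1) => // e es.
have [i ki aie] := sa e es; exists i => //; rewrite ki /= ltn_addl // ltnS.
by rewrite (leq_trans (a_ge i)) // aie leq_sum_mem.
Qed.

Section IdempotentUltrafilter.
Variable p : set_system nat.
Hypothesis pU : UltraFilter p.
Hypothesis pp : ultra_add p p = p.

Lemma idempotent_star A : p A -> p (A `&` star p A).
Proof. by move=> pA; apply: filterI => //; rewrite -pp in pA. Qed.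

Lemma idempotent_star_shift A n :
  (A `&` star p A) n -> p (shift_set (A `&` star p A) n).
Proof.
move=> [_ pAn]; have := idempotent_star pAn.
by apply: filterS => m [Anm pAnm]; split=> //; rewrite /star /= shift_setD in pAnm.
Qed.

End IdempotentUltrafilter.

Definition FS_tail (F0 : set nat) m := FS (F0 `&` [set n | m <= n]).

Lemma FS_tail_ge F0 m n : FS_tail F0 m n -> m <= n.
Proof.
move=> [[|e s] [_ // _ sF0 ->]]; have [_ me] := sF0 e (mem_head _ _).
by apply: leq_trans me _; apply: leq_sum_mem; rewrite mem_head.
Qed.

Lemma FS_tail_add F0 m n k :
  FS_tail F0 m n -> FS_tail F0 (maxn m n.+1) k -> FS_tail F0 m (n + k).
Proof.
move=> [s [us s0 sF0 ->]] [t [ut t0 tF0 ->]]; exists (s ++ t); split.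
- rewrite cat_uniq us ut andbT /=; apply/hasPn => e /tF0 [_ Me].
  apply/negP => /leq_sum_mem; rewrite leqNgt.
  by rewrite (leq_trans _ Me) // leq_max ltnSn orbT.
- by case: (s) s0.
- move=> i; rewrite mem_cat => /orP [/sF0 //|/tF0 [F0i Mi]]; split=> //.
  exact: leq_trans (leq_maxl _ _) Mi.
- by rewrite big_cat.
Qed.

Lemma FS_tail_subsemigroup F0 : infinite_set F0 ->
  subsemigroup_family (range (FS_tail F0)).
Proof.
move=> /infinite_natP F0inf; split.
  have [|m|p [pU Tp]] := @ultra_extend_decr _ (FS_tail F0).
  - move=> m; apply: FS_mono => n [F0n mn]; split=> //; exact: ltnW.
  - by have [e me F0e] := F0inf m; exists e; apply: sub_FS.
  by exists p; split=> // _ [m _ <-].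
move=> p q [pU Tp] [qU Tq]; split; first exact: ultra_add_ultra.
move=> _ [m _ <-]; apply: filterS (Tp _ (ex_intro2 _ _ m I erefl)) => n Tmn.
apply: filterS (Tq _ (ex_intro2 _ _ (maxn m n.+1) I erefl)) => k.
exact: FS_tail_add.
Qed.

Lemma FS_diagonal : diagonal_ultrafilters FS.
Proof.
move=> F0 /FS_tail_subsemigroup /ultra_idempotent [p [[pU Tp] pp]].
have pT m : p (FS_tail F0 m) by apply: Tp; exists m.
have tails N : p [set n | N <= n] by apply: filterS (pT N) => n /FS_tail_ge.
exists p; split=> //; first by apply: filterS (pT 0); apply: FS_mono => n [].
move=> B pB Bdecr; pose st A := A `&` star p A.
pose good j E := [/\ p E, forall n, E n -> p (shift_set E n) & E `<=` B j].
have good_st j A : p A -> A `<=` B j -> good j (st A).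
  move=> pA AB; split=> [|n|n [/AB]//]; first exact: idempotent_star.
  exact: idempotent_star_shift.
have good_next j E a : good j E -> E a -> good j.+1 (st (E `&` shift_set E a `&` B j.+1)).
  move=> [pE pEs _] Ea; apply: good_st => [|n [] //].
  exact: filterI (filterI pE (pEs a Ea)) (pB _).
have [E [a [Enext goodE Ea aincr]]] := @ultra_recursion p good _ _ pU tails
  (fun j E '(And3 pE _ _) => pE) (good_st 0 _ (pB 0) (@subset_refl _ _)) good_next.
exists (range a); first exact: increasing_range_infinite.
move=> k; exists [set a i | i in `I_k]; split; first exact/finite_image/finite_II.
have Echain j : E j.+1 `<=` E j `&` shift_set (E j) (a j).
  by move=> n; rewrite Enext => -[[[]]].
have [_ _ EB] := goodE k.
by move=> n /(FS_mono (@range_setD_image a k)) /(FS_chain_sub aincr Ea Echain) /EB.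
Qed.

Definition pair_of m n (mn : m < n) : pair2 := exist _ (m, n) mn.

Definition pair_section (A : set pair2) m : set nat :=
  [set n | forall mn : m < n, A (pair_of mn)].

Definition pair_ultra (p : set_system nat) : set_system pair2 :=
  [set A | p [set m | p (pair_section A m)]].

Lemma pair_ultra_ultra p : UltraFilter p -> (forall N, p [set n | N <= n]) ->
  UltraFilter (pair_ultra p).
Proof.
move=> pU tails; have pairF : Filter (pair_ultra p).
  split; rewrite /pair_ultra /=.
  - by apply: filterS filterT => m _; apply: filterS filterT.
  - move=> A B /= pA pB; apply: filterS (filterI pA pB) => m [pAm pBm].
    by apply: filterS (filterI pAm pBm) => n [An Bn] mn; split; [apply: An|apply: Bn].
  - by move=> A B AB /=; apply: filterS => m; apply: filterS => n An mn; apply/AB/An.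
apply: ultra_setVsetC => [|A].
  split=> // p0; apply: (filter_not_empty p).
  apply: filterS (p0 : p [set m | p (pair_section set0 m)]) => m /= pm.
  apply: (filter_not_empty p); apply: filterS (filterI pm (tails m.+1)) => n [+ mn].
  by move/(_ mn).
have [pA|pCA] := in_ultra_setVsetC [set m | p (pair_section A m)] pU; [by left|right].
apply: filterS pCA => m /= npA; have [/npA //|pCA] := in_ultra_setVsetC (pair_section A m) pU.
apply: filterS (filterI pCA (tails m.+1)) => n [nA _] mn An; apply: nA => mn'.
by rewrite (bool_irrelevance mn' mn).
Qed.

Lemma rr_diagonal : diagonal_ultrafilters rr.
Proof.
move=> F0 /infinite_natP F0inf.
have [|N|p [pU pF0N]] := @ultra_extend_decr _ (fun N => F0 `&` [set n | N <= n]).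
- by move=> N n [F0n Nn]; split=> //; apply: ltnW.
- by have [n Nn F0n] := F0inf N; exists n.
have tails N : p [set n | N <= n] by apply: filterS (pF0N N) => n [].
have pF0 : p F0 by apply: filterS (pF0N 0) => n [].
exists (pair_ultra p); split; first exact: pair_ultra_ultra.
  by apply: filterS (pF0) => m F0m; apply: filterS pF0 => n F0n mn; split.
move=> B pB Bdecr; pose M j := [set m | p (pair_section (B j) m)].
pose good j C := p C /\ C `<=` M j.
have good_next j C a : good j C -> C a -> good j.+1 (C `&` pair_section (B j) a `&` M j.+1).
  by move=> [pC CM] Ca; split=> [|n [] //]; apply: filterI (filterI pC (CM a Ca)) (pB _).
have [C [a [Cnext goodC Ca aincr]]] := @ultra_recursion p good _ _ pU tails
  (fun j C goodC => goodC.1) (conj (pB 0) (@subset_refl _ _)) good_next.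
have a_mono : {mono a : i j / i < j} := leqW_mono (leq_mono (homo_ltn ltn_trans aincr)).
have Cdecr : forall i j, i <= j -> C j `<=` C i.
  by apply: nonincreasing_setP => j n; rewrite Cnext => -[[]].
exists (range a); first exact: increasing_range_infinite.
move=> k; exists [set a i | i in `I_k]; split; first exact/finite_image/finite_II.
move=> [[m n] mn] [/= /range_setD_image [i ki aim] /range_setD_image [j _ ajn]].
subst m n; have ij : i < j by rewrite -a_mono.
apply: (nonincreasing_setP Bdecr ki).
have : C i.+1 (a j) by exact: (Cdecr _ _ ij _ (Ca j)).
by rewrite Cnext => -[[_ /(_ mn)]].
Qed.

Lemma Lambda_sub_Gamma {Psi : Type} {X : topologicalType} (rho : set nat -> set Psi)
  (x : Psi -> X) : Lambda_set rho x `<=` Gamma_set rho x.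
Proof.
move=> eta [F [Finf Fcvg]] U /Fcvg [K [Kfin FKU]].
by exists (F `\` K); split=> //; apply: infinite_setD.
Qed.

Lemma fmap_ultra T U (f : T -> U) (F : set_system T) :
  UltraFilter F -> UltraFilter (f @ F).
Proof.
move=> FU; apply: ultra_setVsetC => A.
exact: (in_ultra_setVsetC (f @^-1` A) FU).
Qed.

Section MetricSpace.
Context {R : realType} {X : metricType R}.
Local Open Scope ring_scope.

Lemma natr_inv_lt (e : R) : 0 < e -> exists k : nat, k.+1%:R^-1 < e.
Proof.
move=> e0; exists (Num.Def.truncn e^-1).
by rewrite invf_plt ?posrE ?ltr0n //; apply: truncnS_gt.
Qed.

Lemma Lambda_of_cvg {Psi : Type} (rho : set nat -> set Psi) (x : Psi -> X)
    (Q : set_system Psi) (eta : X) :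
  diagonalizes rho Q -> x @ Q --> eta -> Lambda_set rho x eta.
Proof.
move=> Qdiag xQeta; pose B k := x @^-1` ball eta k.+1%:R^-1.
have [k|k|F Finf FB] := Qdiag B.
- by apply: xQeta; apply: nbhsx_ballx; rewrite invr_gt0.
- by move=> s; apply: le_ball; rewrite lef_pV2 ?posrE ?ltr0n // ler_nat.
exists F; split=> // V /nbhs_ballP [e e0 eV].
have [k ke] := natr_inv_lt e0; have [K [Kfin FKB]] := FB k.
by exists K; split=> // s /FKB Bs; apply: eV; exact: le_ball (ltW ke) _ Bs.
Qed.

Lemma isolated_Gamma_Lambda {Psi : Type} (rho : set nat -> set Psi) (x : Psi -> X) eta :
  diagonal_ultrafilters rho -> locally_compact [set: X] ->
  isolated_point (Gamma_set rho x) eta -> Lambda_set rho x eta.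
Proof.
move=> rhodiag Xlc [Geta [U [Ueta UG]]].
have [C Ceta [Ccpt _]] := Xlc eta I.
have {}Ceta : nbhs eta C by move: Ceta; rewrite /within /=; apply: filterS => z; apply.
have [r r0 rUC] := (nbhs_ballP _ _).1 (filterI Ueta Ceta).
have [r20 r2r] : 0 < r / 2 /\ r / 2 <= r by rewrite /= in r0; split; lra.
pose W := ball eta (r / 2).
have WC : W `<=` C by move=> z /(le_ball r2r) /rUC [].
have [F0 [F0inf F0W]] := Geta W (nbhsx_ballx _ _ r20).
have [Q [QU QF0 Qdiag]] := rhodiag F0 F0inf.
have xQU := fmap_ultra x QU.
have xQW : (x @ Q) W by apply: filterS F0W QF0.
move: Ccpt; rewrite compact_ultra => /(_ _ xQU (filterS WC xQW)) [y [Cy xQy]].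
have Uy : U y.
  have [z [Wz yz]] := filter_ex (filterI xQW (xQy _ (nbhsx_ballx y _ r20))).
  by have /rUC [] := ball_split Wz (ball_sym yz).
have Ly : Lambda_set rho x y := Lambda_of_cvg Qdiag xQy.
have : (U `&` Gamma_set rho x) y by split=> //; apply: Lambda_sub_Gamma.
by rewrite UG => <-.
Qed.

Lemma limit_point_seq (eta : X) : limit_point [set: X] eta ->
  exists2 y : nat -> X, y @ \oo --> eta & forall j, y j != eta.
Proof.
move=> etalim; have pt n : exists z, z != eta /\ ball eta n.+1%:R^-1 z.
  have /etalim [z [zeta _ etaz]] : nbhs eta (ball eta n.+1%:R^-1).
    by apply: nbhsx_ballx; rewrite invr_gt0.
  by exists z.
have [y yP] := choice pt; exists y => [|j]; last exact: (yP j).1.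
apply/cvg_ballP => e e0; have [N Ne] := natr_inv_lt e0.
exists N => // n /= Nn; apply: le_ball (yP n).2; apply: le_trans (ltW Ne).
by rewrite lef_pV2 ?posrE ?ltr0n // ler_nat.
Qed.

Definition avoiding (y : nat -> X) k : set X := [set z | forall j, (j <= k)%N -> z != y j].

Lemma nbhs_avoiding (eta : X) (y : nat -> X) : (forall j, y j != eta) ->
  forall k, nbhs eta (avoiding y k).
Proof.
move=> y_neq; have nbhs_neq j : nbhs eta [set z | z != y j].
  have /(nbhsx_ballx eta) : 0 < mdist eta (y j) by rewrite mdist_gt0 eq_sym.
  by apply: filterS => z; rewrite ballEmdist /=; apply: contraTneq => ->; rewrite ltxx.
elim=> [|k IH]; first by apply: filterS (nbhs_neq 0) => z zy0 [].
apply: filterS (filterI IH (nbhs_neq k.+1)) => z [zk zk1] j.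
by rewrite leq_eqVlt => /orP [/eqP -> //|]; apply: zk.
Qed.

Section Separation.
Variables (eta : X) (y : nat -> X).
Hypothesis y_cvg : y @ \oo --> eta.
Hypothesis y_neq : forall j, y j != eta.

Lemma closure_tail (L : set X) : (forall k, L (y k.+1)) -> closure L eta.
Proof.
move=> Ly B /y_cvg [N _ NB]; exists (y N.+1); split=> //.
exact/NB/leqnSn.
Qed.

Lemma Lambda_Gamma_separation {Psi : Type} (rho : set nat -> set Psi) (x : Psi -> X) :
  (forall A B, A `<=` B -> rho A `<=` rho B) ->
  (forall k, exists2 F, infinite_set F & rho F `<=` x @^-1` [set y k.+1]) ->
  (forall D, infinite_set D -> rho D `<=` x @^-1` avoiding y 0 ->
    exists c, forall D', D' `<=` D -> infinite_set D' ->
      exists2 s, rho D' s & x s = y c.+1) ->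
  Lambda_set rho x <> Gamma_set rho x /\ ~ closed (Lambda_set rho x).
Proof.
move=> rho_mono const_on_block eventually_const.
have Ly k : Lambda_set rho x (y k.+1).
  have [F Finf Fy] := const_on_block k; exists F; split=> // V Vy; exists set0.
  split=> [|s]; first exact: finite_set0.
  by rewrite setD0 => /Fy xs; rewrite /preimage /= xs; apply: nbhs_singleton.
have Geta : Gamma_set rho x eta.
  move=> U /y_cvg [N _ NU]; have [F Finf Fy] := const_on_block N.
  by exists F; split=> // s /Fy xs; rewrite /preimage /= xs; apply/NU/leqnSn.
have nLeta : ~ Lambda_set rho x eta.
  move=> [F [Finf FL]]; have [K0 [K0fin FK0]] := FL _ (nbhs_avoiding y_neq 0).
  have [c Dc] := eventually_const _ (infinite_setD Finf K0fin) FK0.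
  have [K1 [K1fin FK1]] := FL _ (nbhs_avoiding y_neq c.+1).
  have sub0 : F `\` (K0 `|` K1) `<=` F `\` K0.
    by move=> n [Fn nK]; split=> // ?; apply: nK; left.
  have inf01 : infinite_set (F `\` (K0 `|` K1)).
    by apply: infinite_setD; rewrite ?finite_setU.
  have [s FKs xs] := Dc _ sub0 inf01.
  have /FK1 : rho (F `\` K1) s.
    by apply: rho_mono FKs => n [Fn nK]; split=> // ?; apply: nK; right.
  by rewrite /= xs => /(_ c.+1 (leqnn _)); rewrite eqxx.
split; first by move=> LG; apply: nLeta; rewrite LG.
by move=> Lcl; apply: nLeta; apply: Lcl; apply: closure_tail.
Qed.

End Separation.
End MetricSpace.

Definition block i := logn 2 i.+1.

Lemma block_infinite k : infinite_set [set i | block i = k].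
Proof.
apply/infinite_natP => N; have pos : 0 < 2 ^ k * N.*2.+1 by rewrite muln_gt0 expn_gt0.
exists (2 ^ k * N.*2.+1).-1.
  rewrite -ltnS prednK //; apply: leq_trans (leq_pmull _ (expn_gt0 2 k)).
  by rewrite ltnS -addnn leq_addr.
rewrite /= /block prednK // lognM ?expn_gt0 // lognX logn_prime // eqxx muln1.
by rewrite logn_coprime ?addn0 // coprime2n /= odd_double.
Qed.

Lemma infinite_lt_pair (D : set nat) : infinite_set D -> exists m n, [/\ m < n, D m & D n].
Proof.
move=> /infinite_natP Dinf; have [m _ Dm] := Dinf 0; have [n mn Dn] := Dinf m.+1.
by exists m, n.
Qed.

Lemma rr_mono A B : A `<=` B -> rr A `<=` rr B.
Proof. by move=> AB s [As Bs]; split; apply: AB. Qed.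

Section BlockPairSeq.
Context {R : realType} {X : metricType R}.
Variables (eta : X) (y : nat -> X).
Hypothesis y_cvg : y @ \oo --> eta.
Hypothesis y_neq : forall j, y j != eta.

Definition block_pair_seq (s : pair2) : X :=
  if block (val s).1 == block (val s).2 then y (block (val s).1).+1 else y 0.

Lemma block_pair_seq_separation :
  Lambda_set rr block_pair_seq <> Gamma_set rr block_pair_seq /\
  ~ closed (Lambda_set rr block_pair_seq).
Proof.
apply: (Lambda_Gamma_separation y_cvg y_neq (@rr_mono)) => [k|D Dinf DV0].
  exists [set i | block i = k]; first exact: block_infinite.
  by move=> [[m n] mn] [/= bm bn]; rewrite /preimage /block_pair_seq /= bm bn eqxx.
have same m n : D m -> D n -> block m = block n.
  have sameP m' n' : m' < n' -> D m' -> D n' -> block m' = block n'.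
    move=> mn Dm Dn; have /DV0 /(_ 0 (leqnn 0)) : rr D (pair_of mn) by split.
    by rewrite /block_pair_seq /=; case: (block m' =P block n') => // _; rewrite eqxx.
  by move=> Dm Dn; case: (ltngtP m n) => [mn|nm|->] //; [exact: sameP|exact/esym/sameP].
have [m0 Dm0] := infinite_setN0 Dinf.
exists (block m0) => D' D'D /infinite_lt_pair [m [n [mn D'm D'n]]].
exists (pair_of mn); first by split.
by rewrite /block_pair_seq /= (same m n) ?eqxx ?(same n m0) //; apply: D'D.
Qed.

End BlockPairSeq.

Lemma testbit_add a b : (forall i, ~~ (Nat.testbit a i && Nat.testbit b i)) ->
  forall j, Nat.testbit (a + b) j = Nat.testbit a j || Nat.testbit b j.
Proof.
move=> disj j; have ab0 : Nat.land a b = 0.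
  by apply: Nat.bits_inj_0 => i; rewrite Nat.land_spec; apply/negbTE/disj.
rewrite -plusE Nat.add_nocarry_lxor // Nat.lxor_spec.
by have := disj j; case: (Nat.testbit a j); case: (Nat.testbit b j).
Qed.

Lemma testbit_pow2 i j : Nat.testbit (2 ^ i) j = (i == j).
Proof.
have -> : 2 ^ i = Nat.pow 2 i.
  by elim: i => // i IH; rewrite expnS IH Nat.pow_succ_r' multE.
by rewrite Nat.pow2_bits_eqb; case: (Nat.eqb_spec i j); case: eqP.
Qed.

Lemma testbit_sum_pow2 (s : seq nat) : uniq s -> (forall e, e \in s -> exists i, e = 2 ^ i) ->
  forall j, Nat.testbit (\sum_(e <- s) e) j = (2 ^ j \in s).
Proof.
elim: s => [|e s IH] /=; first by move=> _ _ j; rewrite big_nil Nat.bits_0.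
move=> /andP [es us] pow2 j.
have [i ei] := pow2 e (mem_head _ _).
have {}pow2 e' : e' \in s -> exists i, e' = 2 ^ i by move=> e's; apply: pow2; rewrite inE e's orbT.
rewrite big_cons testbit_add => [|k]; last first.
  by rewrite IH // ei testbit_pow2; case: eqP => [<-|//]; rewrite -ei (negbTE es).
by rewrite in_cons IH // ei testbit_pow2 eqn_exp2l // eq_sym.
Qed.

Definition bits_in_block b n := 0 < n /\ forall i, Nat.testbit n i -> block i = b.

Lemma testbit_log2 n : 0 < n -> Nat.testbit n (Nat.log2 n).
Proof. by case: n => // n _; apply: Nat.bit_log2. Qed.

Lemma bits_in_block_inj b c n : bits_in_block b n -> bits_in_block c n -> b = c.
Proof. by move=> [n0 nb] [_ nc]; rewrite -(nb _ (testbit_log2 n0)) (nc _ (testbit_log2 n0)). Qed.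

Lemma bits_in_block_add b c e a d :
  bits_in_block b a -> bits_in_block c d -> bits_in_block e (a + d) -> b = c.
Proof.
move=> [a0 ab] [d0 dc] [_ ade]; apply/eqP/negP => /negP bc.
have disj i : ~~ (Nat.testbit a i && Nat.testbit d i).
  by apply/negP => /andP [/ab ib /dc ic]; move: bc; rewrite -ib -ic eqxx.
move: bc; rewrite -(ab _ (testbit_log2 a0)) -(dc _ (testbit_log2 d0)).
rewrite !ade ?eqxx // testbit_add // testbit_log2 ?orbT //.
Qed.

Definition FS_color n : nat :=
  if pselect (exists b, bits_in_block b n) is left h then (projT1 (cid h)).+1 else 0.

Lemma FS_colorE b n : bits_in_block b n -> FS_color n = b.+1.
Proof.
move=> nb; rewrite /FS_color; case: pselect => [h|]; last by case; exists b.
by case: (cid h) => c /= nc; rewrite (bits_in_block_inj nc nb).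
Qed.

Lemma FS_color_neq0 n : FS_color n != 0 -> bits_in_block (FS_color n).-1 n.
Proof. by rewrite /FS_color; case: pselect => // h _; case: (cid h). Qed.

Lemma FS_pow2_block k n :
  FS [set 2 ^ i | i in [set i | block i = k]] n -> bits_in_block k n.
Proof.
move=> [s [us s0 spow ->]].
have pow2 e : e \in s -> exists i, e = 2 ^ i by move=> /spow [i _ <-]; exists i.
split=> [|j]; last by rewrite testbit_sum_pow2 // => /spow [i ik /(expnI (isT : 1 < 2)) <-].
case: s s0 us spow pow2 => // e s _ _ _ /(_ e (mem_head _ _)) [i ->].
by rewrite big_cons addn_gt0 expn_gt0.
Qed.

Lemma pow2_block_infinite k : infinite_set [set 2 ^ i | i in [set i | block i = k]].
Proof.
apply/infinite_natP => N; have [i Ni ik] := (infinite_natP _).1 (@block_infinite k) N.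
by exists (2 ^ i); [apply: leq_trans Ni (ltnW (ltn_expl _ _))|exists i].
Qed.

Section FSColorSeq.
Context {R : realType} {X : metricType R}.
Variables (eta : X) (y : nat -> X).
Hypothesis y_cvg : y @ \oo --> eta.
Hypothesis y_neq : forall j, y j != eta.

Definition FS_color_seq (n : nat) : X := y (FS_color n).

Lemma FS_color_seq_separation :
  Lambda_set FS FS_color_seq <> Gamma_set FS FS_color_seq /\
  ~ closed (Lambda_set FS FS_color_seq).
Proof.
apply: (Lambda_Gamma_separation y_cvg y_neq (@FS_mono)) => [k|D Dinf DV0].
  exists [set 2 ^ i | i in [set i | block i = k]]; first exact: pow2_block_infinite.
  by move=> n /FS_pow2_block /FS_colorE nk; rewrite /preimage /FS_color_seq /= nk.
have monochrome n : FS D n -> bits_in_block (FS_color n).-1 n.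
  move=> /DV0 /(_ 0 (leqnn 0)) ynz; apply: FS_color_neq0.
  by apply: contra_neq ynz; rewrite /FS_color_seq => ->.
have [a0 Da0] := infinite_setN0 Dinf.
exists (FS_color a0).-1 => D' D'D /infinite_setN0 [d D'd]; exists d; first exact: sub_FS.
have Dd := D'D _ D'd; rewrite /FS_color_seq (FS_colorE (b := (FS_color a0).-1)) //.
have [->//|a0d] := eqVneq a0 d; first exact/monochrome/sub_FS.
suff -> : (FS_color a0).-1 = (FS_color d).-1 by apply/monochrome/sub_FS.
apply: (bits_in_block_add (monochrome _ (sub_FS Da0)) (monochrome _ (sub_FS Dd))
  (monochrome (a0 + d) _)).
exists [:: a0; d]; split=> //; first by rewrite /= inE a0d.
- by move=> i; rewrite !inE => /orP [/eqP ->|/eqP ->].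
- by rewrite big_cons big_seq1.
Qed.

End FSColorSeq.

Theorem corollary3p4 (R : realType) (X : metricType R)
  (hacc : exists eta : X, limit_point [set: X] eta) :
  [/\ (exists x : pair2 -> X, Lambda_set rr x <> Gamma_set rr x),
      (exists x : pair2 -> X, ~ closed (Lambda_set rr x)) &
      locally_compact [set: X] ->
        forall (x : pair2 -> X) (eta : X),
          isolated_point (Gamma_set rr x) eta -> Lambda_set rr x eta] /\
  [/\ (exists x : nat -> X, Lambda_set FS x <> Gamma_set FS x),
      (exists x : nat -> X, ~ closed (Lambda_set FS x)) &
      locally_compact [set: X] ->
        forall (x : nat -> X) (eta : X),
          isolated_point (Gamma_set FS x) eta -> Lambda_set FS x eta].
Proof.
have [eta /limit_point_seq [y y_cvg y_neq]] := hacc.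
have [rr_neq rr_not_closed] := block_pair_seq_separation y_cvg y_neq.
have [FS_neq FS_not_closed] := FS_color_seq_separation y_cvg y_neq.
split; split=> [||Xlc x eta']; try by eexists; eassumption.
- exact: (isolated_Gamma_Lambda rr_diagonal Xlc).
- exact: (isolated_Gamma_Lambda FS_diagonal Xlc).
Qed.
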